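(* Let $I=(G,T,k)$, $G=(V,E)$, be a Node Multiway Cut instance satisfying: (R1) no two terminals are adjacent and $p(I)\ge 0$; (R2) no vertex of $V\setminus T$ is adjacent to two distinct terminals; (R3) for every terminal $t\in T$ and every neighbour $w\in V\setminus T$ of $t$, the optimum value of the LP-relaxation of $I$ with the additional constraint $d_w=0$ is strictly larger than $LP(I)$. Then: (1) the assignment $d_v=1/2$ for $v\in N(T)$ and $d_v=0$ for $v\in V\setminus (T\cup N(T))$ is an optimal solution to the LP-relaxation of $I$; (2) for every terminal $t\in T$, the set $N(t)$ is the unique minimum separating cut of $t$.
   Context: A Node Multiway Cut instance $I=(G,T,k)$ consists of a simple undirected graph $G=(V,E)$, a set $T\subseteq V$ of terminals and an integer $k$; it is a YES-instance iff there is a set $X\subseteq V\setminus T$ with $|X|\le k$ such that every path in $G$ between two distinct terminals contains a vertex of $X$. Let $\mathcal P(I)$ be the set of all simple paths in $G$ connecting two distinct terminals. The LP-relaxation of $I$ is: minimize $\sum_{v\in V\setminus T} d_v$ subject to $\sum_{v\in V(P)\setminus T} d_v\ge 1$ for every $P\in\mathcal P(I)$ and $d_v\ge 0$ for all $v\in V\setminus T$. $LP(I)$ denotes its optimum value and $p(I)=k-LP(I)$. $N(v)$ is the set of neighbours of $v$, $N(S)=\bigcup_{v\in S}N(v)\setminus S$. For $t\in T$, a separating cut of $t$ is a set $S\subseteq V\setminus T$ such that $t$ is disconnected from $T\setminus\{t\}$ in $G-S$. *)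

From HB Require Import structures.
From mathcomp Require Import all_boot all_order all_algebra.
Set Implicit Arguments. Unset Strict Implicit. Unset Printing Implicit Defensive.
Import Order.TTheory GRing.Theory Num.Theory.

Section NMC.
Variables (V : finType) (e : rel V) (T : {set V}).

Definition nbh (v : V) : {set V} := [set u | e v u].
Definition nbhS (S : {set V}) : {set V} := (\bigcup_(v in S) nbh v) :\: S.

Definition term_path (x : V) (s : seq V) : bool :=
  [&& path e x s, uniq (x :: s), x \in T, last x s \in T & x != last x s].

Variable R : realFieldType.
Local Open Scope ring_scope.

Definition lp_cost (d : V -> R) : R := \sum_(v in ~: T) d v.

Definition lp_feasible (Z : {set V}) (d : V -> R) : Prop :=
  (forall v, v \notin T -> 0 <= d v) /\
  (forall x s, term_path x s -> 1 <= \sum_(v <- x :: s | v \notin T) d v) /\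
  (forall w, w \in Z -> d w = 0).

Definition lp_value (Z : {set V}) (x : R) : Prop :=
  (exists d, lp_feasible Z d /\ lp_cost d = x) /\
  (forall d, lp_feasible Z d -> x <= lp_cost d).

Definition lp_optimal (d : V -> R) : Prop :=
  lp_feasible set0 d /\ forall d', lp_feasible set0 d' -> lp_cost d <= lp_cost d'.

End NMC.

Definition del_rel (V : finType) (e : rel V) (S : {set V}) : rel V :=
  [rel x y | [&& e x y, x \notin S & y \notin S]].

Definition sep_cut (V : finType) (e : rel V) (T : {set V}) (t : V) (S : {set V}) : bool :=
  (S \subset ~: T) &&
  [forall t' in T :\ t, ~~ connect (del_rel e S) t t'].

Definition unique_min_sep_cut (V : finType) (e : rel V) (T : {set V}) (t : V) (S : {set V}) : Prop :=
  sep_cut e T t S /\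
  forall S', sep_cut e T t S' -> #|S'| <= #|S| -> S' = S.

From HB Require Import structures.
From mathcomp Require Import all_boot all_order all_algebra.
From mathcomp Require Import lra.
Import Order.TTheory GRing.Theory Num.Theory.
Set Implicit Arguments. Unset Strict Implicit.
Local Open Scope ring_scope.

(* Let d be an optimal LP solution.  The heart of the proof (section
   [Distances]) is a threshold rounding: with dist t v the d-weighted
   distance from terminal t to v, the ball of radius th around each terminal
   "ends inside" some vertices, and giving such vertices 1/2 (or 1 when
   several balls end in them) is LP-feasible for every th in (0, 1].
   Integrating over th in (0, 1/2] -- a finite Stieltjes sum over the
   breakpoints where the rounding changes ([step_integral]) -- the average
   rounding costs at most LP, vertex by vertex.  If a neighbour w of a
   terminal had d_w < 1/2, the rounding at 1/2 would vanish on w, so by R3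
   it would cost more than LP, contradicting the average: hence d >= 1/2 on
   N(T) ([essential_half]).

   Section [HalfSolution] then shows that 1/2 on N(T) is feasible (by R2)
   and no costlier than d, hence optimal, and that a separating cut of t
   at most as large as N(t) but different from it would give a solution
   with d_w = 0 for some w in N(t), of cost at most LP, contradicting R3. *)

Section StepIntegral.
Variable R : realFieldType.

(* For breakpoints c0 < c1 < ... < cn, [step_integral c0 [:: c1; ...; cn] F]
   is the integral over (c0, cn] of the step function equal to F c_i on
   (c_(i-1), c_i]; it stands in for the integral over a threshold. *)
Fixpoint step_integral (c0 : R) (cs : seq R) (F : R -> R) : R :=
  if cs is c :: cs' then (c - c0) * F c + step_integral c cs' F else 0.

Lemma eq_step_integral c0 cs F G : {in cs, F =1 G} ->
  step_integral c0 cs F = step_integral c0 cs G.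
Proof.
elim: cs c0 => //= c cs IH c0 FG.
by rewrite FG ?mem_head // (IH c) // => x xcs; apply: FG; rewrite inE xcs orbT.
Qed.

Lemma step_integralZ c0 cs k F :
  step_integral c0 cs (fun c => k * F c) = k * step_integral c0 cs F.
Proof. by elim: cs c0 => /= [|c cs IH] c0; rewrite ?mulr0 // IH mulrDr mulrCA. Qed.

Lemma step_integralD c0 cs F G :
  step_integral c0 cs (fun c => F c + G c) =
  step_integral c0 cs F + step_integral c0 cs G.
Proof. by elim: cs c0 => /= [|c cs IH] c0; rewrite ?addr0 // IH mulrDr addrACA. Qed.

Lemma step_integral_sum (I : finType) (A : {set I}) c0 cs (F : I -> R -> R) :
  step_integral c0 cs (fun c => \sum_(i in A) F i c) =
  \sum_(i in A) step_integral c0 cs (F i).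
Proof.
elim: cs c0 => /= [|c cs IH] c0; first by rewrite big1.
by rewrite IH mulr_sumr -big_split.
Qed.

Lemma step_integral0 c0 cs : step_integral c0 cs (fun _ => 0) = 0.
Proof. by elim: cs c0 => //= c cs IH c0; rewrite IH mulr0 addr0. Qed.

Lemma ler_step_integral c0 cs F G : sorted <%R (c0 :: cs) ->
  {in cs, forall c, F c <= G c} -> step_integral c0 cs F <= step_integral c0 cs G.
Proof.
elim: cs c0 => //= c cs IH c0 /andP[lt0 scs] FG.
apply: lerD; first by apply: ler_wpM2l; [rewrite subr_ge0 ltW | apply: FG; rewrite mem_head].
by apply: IH => // x xcs; apply: FG; rewrite inE xcs orbT.
Qed.

Lemma ltr_step_integral c0 cs F G : sorted <%R (c0 :: cs) ->
  {in cs, forall c, F c <= G c} -> (exists2 c, c \in cs & F c < G c) ->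
  step_integral c0 cs F < step_integral c0 cs G.
Proof.
elim: cs c0 => [|c cs IH] c0 /=; first by move=> _ _ [].
move=> /andP[lt0 scs] FG [x]; rewrite inE => /predU1P[-> lt_x|xcs lt_x].
  apply: ltr_leD; first by rewrite ltr_pM2l ?subr_gt0.
  by apply: ler_step_integral => // y ycs; apply: FG; rewrite inE ycs orbT.
apply: ler_ltD; first by apply: ler_wpM2l; [rewrite subr_ge0 ltW | apply: FG; rewrite mem_head].
by apply: IH => //; [move=> y ycs; apply: FG; rewrite inE ycs orbT | exists x].
Qed.

Definition ind (b : bool) : R := if b then 1 else 0.

Lemma step_integral_ind c0 cs al be : sorted <%R (c0 :: cs) ->
  al \in c0 :: cs -> be \in c0 :: cs -> al <= be ->
  step_integral c0 cs (fun c => ind ((al < c) && (c <= be))) = be - al.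
Proof.
elim: cs c0 al be => /= [|c cs IH] c0 al be.
  by move=> _; rewrite !inE => /eqP-> /eqP->; rewrite subrr.
move=> /[dup] scs /andP[lt0 /[dup] scs1]; rewrite (path_sortedE lt_trans).
move=> /andP[/allP gt_c _].
have gt_c0 x : x \in c :: cs -> c0 < x.
  by rewrite inE => /predU1P[->//|/gt_c]; apply: lt_trans.
rewrite !inE => /predU1P[->|alcs] /predU1P[->|becs] le_ab.
- rewrite subrr /ind lt_geF //= andbF mulr0 add0r.
  rewrite (eq_step_integral _ (G := fun => 0)) ?step_integral0 // => x xcs.
  by rewrite (lt_geF (gt_c0 x _)) ?andbF // inE xcs orbT.
- have le_cb : c <= be by move: becs => /predU1P[->//|/gt_c/ltW].
  rewrite /ind lt0 le_cb mulr1 (eq_step_integral _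
    (G := fun x => ind ((c < x) && (x <= be)))); last first.
    by move=> x xcs; rewrite gt_c // (lt_trans lt0 (gt_c x xcs)).
  by rewrite IH ?mem_head // addrC addrA subrK.
- by move: (lt_le_trans (gt_c0 _ alcs) le_ab); rewrite ltxx.
- have le_ca : c <= al by move: alcs => /predU1P[->//|/gt_c/ltW].
  by rewrite /ind (le_gtF le_ca) /= mulr0 add0r IH.
Qed.

Lemma step_integral_clamped_ind b cs A B : sorted <%R (0 :: cs) ->
  {in cs, forall c, c <= b} -> Num.min A b <= Num.min B b ->
  Num.min A b \in 0 :: cs -> Num.min B b \in 0 :: cs ->
  step_integral 0 cs (fun c => ind ((A < c) && (c <= B))) =
  Num.min B b - Num.min A b.
Proof.
move=> scs le_b le_AB memA memB; rewrite -(step_integral_ind scs memA memB le_AB).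
apply: eq_step_integral => c ccs; congr ind.
by rewrite gt_min le_min le_b // andbT [b < c]ltNge le_b // orbF.
Qed.

Lemma breakpoints_of (L : seq R) :
  exists cs, sorted <%R (0 :: cs) /\ forall x, (x \in cs) = (x \in L) && (0 < x).
Proof.
exists (sort <=%R (undup [seq x <- L | 0 < x])).
have mem_cs x : x \in sort <=%R (undup [seq x <- L | 0 < x]) = (x \in L) && (0 < x).
  by rewrite mem_sort mem_undup mem_filter andbC.
split=> //=; rewrite (path_sortedE lt_trans) sort_lt_sorted undup_uniq andbT.
by apply/allP => x; rewrite mem_cs => /andP[].
Qed.

End StepIntegral.
Arguments ind {R}.

Section SeqSums.
Variable R : realFieldType.

Lemma sum_undup_le (X : eqType) (s : seq X) (f : X -> R) :
  {in s, forall u, 0 <= f u} -> \sum_(u <- undup s) f u <= \sum_(u <- s) f u.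
Proof.
elim: s => //= x s IH f_ge0.
have le_s : \sum_(u <- undup s) f u <= \sum_(u <- s) f u.
  by apply: IH => u us; apply: f_ge0; rewrite inE us orbT.
rewrite big_cons; case: ifP => _; last by rewrite big_cons lerD.
by rewrite -[leLHS]add0r lerD // f_ge0 ?mem_head.
Qed.

Lemma sum_sub_le (X : eqType) (s1 s2 : seq X) (f : X -> R) :
  uniq s1 -> {subset s1 <= s2} -> {in s2, forall u, 0 <= f u} ->
  \sum_(u <- s1) f u <= \sum_(u <- s2) f u.
Proof.
move=> u1 sub f_ge0; apply: le_trans (sum_undup_le f_ge0).
have pe : perm_eq s1 [seq u <- undup s2 | u \in s1].
  apply: uniq_perm => //; first by rewrite filter_uniq ?undup_uniq.
  by move=> u; rewrite mem_filter mem_undup; case: (boolP (u \in s1)) => // /sub ->.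
rewrite (perm_big _ pe) big_filter [leRHS](bigID (mem s1)) /= lerDl.
by rewrite big_seq_cond sumr_ge0 // => u /andP[us _]; rewrite f_ge0 // -mem_undup.
Qed.

Lemma sum_ge1_of_two (X : eqType) (s : seq X) (f : X -> R) u q :
  uniq s -> {in s, forall v, 0 <= f v} -> u \in s -> q \in s ->
  (u != q -> 1 <= f u + f q) -> (u = q -> 1 <= f u) ->
  1 <= \sum_(v <- s) f v.
Proof.
move=> us f_ge0 us' qs two one; case: (eqVneq u q) => [equq|neuq].
  apply: le_trans (one equq) _; have := @sum_sub_le X [:: u] s f isT.
  by rewrite big_seq1; apply=> // v; rewrite inE => /eqP->.
apply: le_trans (two neuq) _; have := @sum_sub_le X [:: u; q] s f.
rewrite big_cons big_seq1; apply=> //; first by rewrite /= inE neuq.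
by move=> v; rewrite !inE => /orP[]/eqP->.
Qed.

Lemma bigmin_attained (I : Type) (r : seq I) (P : pred I) (F : I -> R) x :
  \big[Num.min/x]_(i <- r | P i) F i != x ->
  exists2 i, P i & F i = \big[Num.min/x]_(j <- r | P j) F j.
Proof.
pose attained y := y = x \/ exists2 i, P i & F i = y.
have : attained (\big[Num.min/x]_(i <- r | P i) F i).
  apply: (big_ind attained); first by left.
    by move=> y z Ay Az; rewrite minEle; case: ifP.
  by move=> i Pi; right; exists i.
by case=> [->|//]; rewrite eqxx.
Qed.

End SeqSums.

Section Distances.
Variables (R : realFieldType) (V : finType) (e : rel V) (T : {set V}).
Hypothesis e_sym : symmetric e.
Variable d : V -> R.
Hypothesis d_feas : lp_feasible e T set0 d.

Definition wt v : R := if v \in T then 0 else d v.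

Lemma wt_ge0 v : 0 <= wt v.
Proof. by rewrite /wt; case: ifPn => // vT; case: d_feas => d_ge0 _; apply: d_ge0. Qed.

Lemma wt_terminal v : v \in T -> wt v = 0.
Proof. by rewrite /wt => ->. Qed.

Lemma sum_nonterminal (f : V -> R) s :
  \sum_(v <- s | v \notin T) f v = \sum_(v <- s) (if v \in T then 0 else f v).
Proof. by rewrite big_mkcond; apply: eq_bigr => v _; case: (v \in T). Qed.

Lemma wt_term_path x s : term_path e T x s -> 1 <= \sum_(v <- x :: s) wt v.
Proof. by case: d_feas => _ [feas _] /feas; rewrite sum_nonterminal. Qed.

Lemma path_rev x p y : path e x (rcons p y) -> path e y (rcons (rev p) x).
Proof.
have := rev_path e x (rcons p y); rewrite last_rcons belast_rcons rev_cons => ->.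
by rewrite (@eq_path _ _ e) // => u v /=; rewrite e_sym.
Qed.

Fixpoint bounded_seqs n : seq (seq V) :=
  if n is n'.+1 then [::] :: [seq x :: s | x <- enum V, s <- bounded_seqs n']
  else [:: [::]].

Lemma mem_bounded_seqs n s : (size s <= n)%N -> s \in bounded_seqs n.
Proof.
elim: n s => [|n IH] [|x s] //=; rewrite ?inE // => size_s.
by apply/orP; right; apply/allpairsP; exists (x, s); rewrite /= mem_enum IH.
Qed.

Definition approach t v p :=
  [&& path e t p, all (fun u => u \notin T) p & e (last t p) v].

(* The weighted distance from t to v, counting neither end and capped at 1:
   the cheapest approach from t to v. *)
Definition dist t v : R :=
  \big[Num.min/1]_(p <- bounded_seqs #|V| | approach t v p) \sum_(u <- p) wt u.

Lemma dist_ge0 t v : 0 <= dist t v.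
Proof. by apply: le_bigmin => // p _; apply: sumr_ge0 => u _; apply: wt_ge0. Qed.

Lemma dist_le1 t v : dist t v <= 1.
Proof. exact: bigmin_le_id. Qed.

(* Any approach bounds the distance, since a shortest sub-walk is listed. *)
Lemma dist_le_approach t v p : approach t v p -> dist t v <= \sum_(u <- p) wt u.
Proof.
case/and3P => pp ap; case: (shortenP pp) => p' pp' up' sub' ep'.
have app' : approach t v p'.
  by rewrite /approach pp' ep' andbT; apply/allP => u /sub' /(allP ap).
have listed : p' \in bounded_seqs #|V|.
  apply: mem_bounded_seqs; move/card_uniqP: up' => /= card_p'.
  by have := max_card (mem (t :: p')); rewrite card_p' => /ltnW.
apply: le_trans (ge_bigmin_seq _ _ _ _ listed app') _.
apply: sum_sub_le => //; first by case/andP: up'.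
by move=> u _; apply: wt_ge0.
Qed.

Lemma dist_attained t v : dist t v < 1 ->
  exists2 p, approach t v p & \sum_(u <- p) wt u = dist t v.
Proof. by move=> lt1; apply: bigmin_attained; rewrite lt_eqF. Qed.

Lemma dist_nbh t v : e t v -> dist t v = 0.
Proof.
move=> etv; apply/le_anti; rewrite dist_ge0 andbT.
have : approach t v [::] by rewrite /approach /= etv.
by move/dist_le_approach; rewrite big_nil.
Qed.

Lemma dist_edge t u v : u \notin T -> e u v -> dist t v <= dist t u + wt u.
Proof.
move=> uT euv; case: (ltP (dist t u) 1) => [lt1|]; last first.
  move=> ge1; apply: le_trans (dist_le1 t v) (le_trans ge1 _).
  by rewrite lerDl wt_ge0.
case: (dist_attained lt1) => p /and3P[pp ap ep] <-.
have : approach t v (rcons p u).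
  by rewrite /approach rcons_path pp ep all_rcons uT ap last_rcons euv.
by move/dist_le_approach; rewrite -cats1 big_cat big_seq1.
Qed.

(* Two cheapest approaches to v from distinct terminals, joined at v, contain
   a terminal path; its LP constraint bounds their total cost from below. *)
Lemma dist_pair t t' v : t \in T -> t' \in T -> t != t' -> v \notin T ->
  1 <= dist t v + wt v + dist t' v.
Proof.
move=> tT t'T ne vT; have wv := wt_ge0 v.
have := dist_ge0 t v; have := dist_ge0 t' v.
case: (ltP (dist t v) 1) => [lt1|]; last lra.
case: (ltP (dist t' v) 1) => [lt1'|]; last lra.
move=> _ _.
case: (dist_attained lt1) => p /and3P[pp _ ep] <-.
case: (dist_attained lt1') => q /and3P[pq _ eq] <-.
set s := p ++ v :: rcons (rev q) t'.
have ps : path e t s by rewrite cat_path pp /= ep path_rev // rcons_path pq eq.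
have : last t s = t' by rewrite last_cat /= last_rcons.
case: (shortenP ps) => s' ps' us' sub_s' last_s'.
have tp : term_path e T t s' by rewrite /term_path ps' us' tT last_s' t'T ne.
apply: le_trans (wt_term_path tp) _.
apply: le_trans (@sum_sub_le _ _ (t :: s') (t :: s) wt us' _ _) _.
- by move=> u; rewrite !inE => /orP[->//|/sub_s' ->]; rewrite orbT.
- by move=> u _; apply: wt_ge0.
rewrite big_cons big_cat big_cons -cats1 big_cat big_seq1 big_rev.
by rewrite (wt_terminal tT) (wt_terminal t'T) /= add0r addr0 addrA.
Qed.

Hypothesis nonadjacent_terminals : forall t t', t \in T -> t' \in T -> ~~ e t t'.

(* [cut_by th t v]: the ball of radius th around t ends inside v, i.e. th
   lies in (dist t v, dist t v + wt v]. *)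
Definition cut_by th t v := (dist t v < th) && (th <= dist t v + wt v).

Definition ncuts th v := #|[set t in T | cut_by th t v]|.
Definition round th v : R :=
  if (1 < ncuts th v)%N then 1 else if (0 < ncuts th v)%N then 2^-1 else 0.

Lemma round_ge0 th v : 0 <= round th v.
Proof. by rewrite /round; case: ifP => _; [|case: ifP => _]; lra. Qed.

Lemma round_half th v t : t \in T -> cut_by th t v -> 2^-1 <= round th v.
Proof.
move=> tT cut; have : (0 < ncuts th v)%N.
  by apply/card_gt0P; exists t; rewrite inE tT cut.
by rewrite /round => ->; case: ifP => _; lra.
Qed.

Lemma round_one th v t t' : t \in T -> t' \in T -> t != t' ->
  cut_by th t v -> cut_by th t' v -> round th v = 1.
Proof.
move=> tT t'T ne cut cut'; have : (1 < ncuts th v)%N.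
  by apply/card_gt1P; exists t, t'; rewrite !inE tT t'T cut cut'.
by rewrite /round => ->.
Qed.

Lemma first_cut_on_walk th t x p : t \in T -> 0 < th ->
  path e x p -> all (fun u => u \notin T) p ->
  x = t \/ (x \notin T /\ dist t x + wt x < th) ->
  has (fun u => th <= dist t u + wt u) p -> has (cut_by th t) p.
Proof.
move=> tT th_gt0; elim: p x => //= y p IH x /andP[exy pp] /andP[yT ap] inside.
have lt_y : dist t y < th.
  case: inside => [xt | [xT lt_x]]; first by rewrite dist_nbh -?xt.
  exact: le_lt_trans (dist_edge t xT exy) lt_x.
case: (leP th (dist t y + wt y)) => [far|near]; first by rewrite /cut_by lt_y far.
by move=> /= reach; rewrite (IH y) ?orbT //; right.
Qed.

Lemma cut_on_path th t t' p : 0 < th -> th <= 1 -> t \in T -> t' \in T ->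
  t != t' -> path e t (rcons p t') -> all (fun u => u \notin T) p ->
  exists2 u, u \in p & cut_by th t u.
Proof.
move=> th_gt0 th_le1 tT t'T ne; case/lastP: p => [|p z].
  by rewrite /= andbT => ett'; move: (nonadjacent_terminals tT t'T); rewrite ett'.
rewrite rcons_path last_rcons all_rcons => /andP[pz ezt'] /andP[zT ap].
have far : th <= dist t z + wt z.
  have := dist_pair tT t'T ne zT; rewrite [dist t' z]dist_nbh 1?e_sym // addr0.
  exact: le_trans.
apply/hasP; apply: (first_cut_on_walk tT th_gt0 pz); first by rewrite all_rcons zT.
  by left.
by apply/hasP; exists z; rewrite ?mem_rcons ?mem_head.
Qed.

(* Each rounding with threshold in (0, 1] is LP-feasible: on a terminal
   path, the balls around its first terminal and around the next terminal
   met each end inside a vertex of the segment joining the two. *)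
Lemma round_feasible th : 0 < th -> th <= 1 -> lp_feasible e T set0 (round th).
Proof.
move=> th_gt0 th_le1; split; first by move=> v _; apply: round_ge0.
split; last by move=> w; rewrite in_set0.
move=> x s /and5P[px ux xT lT xl]; rewrite sum_nonterminal.
have hasT : has (mem T) s.
  case/lastP: s lT xl {px ux} => [|s y]; first by rewrite eqxx.
  by rewrite last_rcons has_rcons => yT _; apply/orP; left.
case: (split_find hasT) => t2 p r t2T no_t in px ux *.
have ap : all (fun u => u \notin T) p by rewrite all_predC.
have pp : path e x (rcons p t2) by move: px; rewrite cat_path => /andP[].
have ne : x != t2.
  by apply: contraTneq ux => ->; rewrite /= mem_cat mem_rcons mem_head.
have [u1 u1p cut1] := cut_on_path th_gt0 th_le1 xT t2T ne pp ap.
have [u2 u2p cut2] : exists2 u2, u2 \in p & cut_by th t2 u2.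
  have t2x : t2 != x by rewrite eq_sym.
  have ap' : all (fun u => u \notin T) (rev p) by rewrite all_rev.
  have [u2] := cut_on_path th_gt0 th_le1 t2T xT t2x (path_rev pp) ap'.
  by rewrite mem_rev; exists u2.
have inS : {subset p <= x :: rcons p t2 ++ r}.
  by move=> u up; rewrite inE mem_cat mem_rcons inE up !orbT.
have u1T := allP ap u1 u1p; have u2T := allP ap u2 u2p.
apply: (sum_ge1_of_two (u := u1) (q := u2)); rewrite ?inS //.
- by move=> v _; case: (v \in T) => //; apply: round_ge0.
- move=> _; rewrite (negbTE u1T) (negbTE u2T).
  by have := round_half xT cut1; have := round_half t2T cut2; lra.
- by move=> equ; rewrite (negbTE u1T) (round_one xT t2T ne cut1) // equ.
Qed.

(* Pointwise bound at a threshold c in (0, 1/2]: if v is cut at all, it is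
   cut by the ball of the terminal t1 nearest to v, or c exceeds the
   distance A2 from v to every other terminal. *)
Lemma round_le_two_steps c v t1 A2 : v \notin T -> t1 \in T ->
  0 < c -> c <= 2^-1 ->
  (forall t, t \in T -> dist t1 v <= dist t v) ->
  (forall t, t \in T -> t != t1 -> A2 <= dist t v) ->
  round c v <= 2^-1 * ind ((dist t1 v < c) && (c <= dist t1 v + wt v))
             + 2^-1 * ind ((A2 < c) && (c <= 2^-1)).
Proof.
move=> vT t1T c_gt0 c_le nearest others.
have ind_ge0 b : 0 <= ind b :> R by rewrite /ind; case: b.
have cut_other t : t \in T -> t != t1 -> cut_by c t v -> (A2 < c) && (c <= 2^-1).
  by move=> tT ne /andP[lt_c _]; rewrite c_le andbT (le_lt_trans (others t tT ne)).
rewrite /round; case: ifP => [/card_gt1P[t [t' [+ + ne]]]|_].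
  rewrite !inE => /andP[tT cut] /andP[t'T cut'].
  have [tb [tbT ne1 cutb]] : exists tb, [/\ tb \in T, tb != t1 & cut_by c tb v].
    by case: (eqVneq t t1) => [eq1|]; [exists t'; rewrite -eq1 eq_sym | exists t].
  have ne1' : t1 != tb by rewrite eq_sym.
  have pair := dist_pair t1T tbT ne1' vT; have near1 := nearest tb tbT.
  have in1 : (dist t1 v < c) && (c <= dist t1 v + wt v).
    by case/andP: (cutb) => lt_c _; apply/andP; split; lra.
  by rewrite /ind in1 (cut_other tb) //; lra.
case: ifP => [/card_gt0P[t]|_]; last by apply: addr_ge0; apply: mulr_ge0 => //; lra.
rewrite inE => /andP[tT cut]; case: (eqVneq t t1) => [eq1|ne].
  rewrite /ind -eq1 ifT //; have := ind_ge0 ((A2 < c) && (c <= 2^-1)); rewrite /ind.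
  lra.
rewrite [ind ((A2 < c) && _)]/ind (cut_other t) //.
by have := ind_ge0 ((dist t1 v < c) && (c <= dist t1 v + wt v)); lra.
Qed.

(* The arithmetic behind the vertex bound: with both clamped steps, their
   total length is at most D when A1 + D + A2 >= 1. *)
Lemma two_steps_length (A1 A2 D : R) : 0 <= A1 -> 0 <= D ->
  (A2 < 2^-1 -> A1 <= A2 /\ 1 <= A1 + D + A2) ->
  2^-1 * (Num.min (A1 + D) 2^-1 - Num.min A1 2^-1)
    + 2^-1 * (2^-1 - Num.min A2 2^-1) <= D / 2.
Proof.
move=> A1_ge0 D_ge0 close; case: (ltP A2 2^-1) => [/close[le12 pair]|ge2].
  by rewrite !minElt; do 3!case: ltP => ?; lra.
by rewrite !minElt; do 3!case: ltP => ?; lra.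
Qed.

(* [breakpoints cs]: cs is an increasing list of thresholds in (0, 1/2]
   containing 1/2 and all clamped distances, so that every rounding is
   constant between consecutive breakpoints. *)
Definition breakpoints (cs : seq R) :=
  [/\ sorted <%R (0 :: cs), {in cs, forall c, c <= 2^-1}, 2^-1 \in cs &
      forall t u, Num.min (dist t u) 2^-1 \in 0 :: cs /\
                  Num.min (dist t u + wt u) 2^-1 \in 0 :: cs].

Lemma breakpoints_exist : exists cs, breakpoints cs.
Proof.
have half_gt0 : (0 : R) < 2^-1 by rewrite invr_gt0 ltr0n.
pose P1 := [seq Num.min (dist t v) 2^-1 | t <- enum V, v <- enum V].
pose P2 := [seq Num.min (dist t v + wt v) 2^-1 | t <- enum V, v <- enum V].
have [cs [scs mem_cs]] := breakpoints_of (2^-1 :: P1 ++ P2).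
have memL x : x \in 2^-1 :: P1 ++ P2 -> 0 <= x -> x \in 0 :: cs.
  rewrite le_eqVlt => xL /predU1P[<-|x_gt0]; first exact: mem_head.
  by rewrite inE mem_cs xL x_gt0 orbT.
exists cs; split=> //.
- move=> c; rewrite mem_cs inE mem_cat => /andP[+ _].
  case/orP=> [/eqP->//|/orP[]/allpairsP[[t v] [_ _ ->]]];
    by rewrite ge_min lexx orbT.
- by rewrite mem_cs mem_head.
- move=> t u; split; apply: memL.
  + by rewrite inE mem_cat; apply/orP; right; apply/orP; left;
      apply/allpairsP; exists (t, u); rewrite !mem_enum.
  + by rewrite le_min dist_ge0 ltW.
  + by rewrite inE mem_cat; apply/orP; right; apply/orP; right;
      apply/allpairsP; exists (t, u); rewrite !mem_enum.
  + by rewrite le_min addr_ge0 ?dist_ge0 ?wt_ge0 ?ltW.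
Qed.

Lemma breakpoints_gt0 cs c : breakpoints cs -> c \in cs -> 0 < c.
Proof.
by case=> /= + _ _ _; rewrite (path_sortedE lt_trans) => /andP[/allP + _]; apply.
Qed.

Lemma vertex_bound cs v : breakpoints cs -> v \notin T ->
  step_integral 0 cs (fun c => round c v) <= wt v / 2.
Proof.
move=> /[dup] bp [scs le_half half_cs mem_dist] vT; have wv := wt_ge0 v.
case: (set_0Vmem T) => [T0|[t0 t0T]].
  rewrite (eq_step_integral _ (G := fun => 0)) ?step_integral0; first lra.
  move=> c _; rewrite /round /ncuts (_ : [set _ in T | _] = set0) ?cards0 //.
  by apply/setP => t; rewrite !inE T0 in_set0.
case: (arg_minP (fun t => dist t v) t0T) => t1 t1T nearest.
have [A2 [others close mem2]] : exists A2,
    [/\ forall t, t \in T -> t != t1 -> A2 <= dist t v,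
        A2 < 2^-1 -> dist t1 v <= A2 /\ 1 <= dist t1 v + wt v + A2 &
        Num.min A2 2^-1 \in 0 :: cs].
  case: (set_0Vmem (T :\ t1)) => [T1|[t0' t0'T]].
    exists 2^-1; split; rewrite ?ltxx ?minxx ?inE ?half_cs ?orbT // => t tT ne.
    have : t \in T :\ t1 by rewrite !inE ne tT.
    by rewrite T1 in_set0.
  case: (arg_minP (fun t => dist t v) t0'T) => t2 t2in second.
  have /setD1P[ne2 t2T] : t2 \in T :\ t1 := t2in.
  exists (dist t2 v); split.
  - by move=> t tT ne; apply: second; apply/setD1P.
  - by move=> _; split; [apply: nearest | apply: dist_pair; rewrite // eq_sym].
  - by case: (mem_dist t2 v).
case: (mem_dist t1 v) => mem1 mem1'.
apply: le_trans (ler_step_integral (G := fun c =>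
    2^-1 * ind ((dist t1 v < c) && (c <= dist t1 v + wt v)) +
    2^-1 * ind ((A2 < c) && (c <= 2^-1))) scs _) _.
  move=> c ccs; apply: round_le_two_steps => //; first exact: breakpoints_gt0 ccs.
  exact: le_half.
rewrite step_integralD !step_integralZ !(@step_integral_clamped_ind _ 2^-1) //; first last.
- by rewrite le_min !ge_min lexx lerDl wv orbT.
- by rewrite minxx inE half_cs orbT.
- by rewrite minxx ge_min lexx orbT.
by rewrite minxx; apply: two_steps_length; rewrite ?dist_ge0.
Qed.

Lemma average_rounding_cost cs : breakpoints cs ->
  step_integral 0 cs (fun c => lp_cost T (round c)) <= lp_cost T d / 2.
Proof.
move=> bp; rewrite /lp_cost step_integral_sum mulr_suml.
apply: ler_sum => v; rewrite inE => vT.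
by have := vertex_bound bp vT; rewrite /wt (negbTE vT).
Qed.

Lemma step_integral_one cs : breakpoints cs ->
  step_integral 0 cs (fun _ => 1) = 2^-1.
Proof.
move=> /[dup] bp [scs le_half half_cs _].
rewrite (eq_step_integral _ (G := fun c => ind ((0 < c) && (c <= 2^-1)))).
  by rewrite step_integral_ind ?mem_head ?subr0 ?inE ?half_cs ?orbT ?invr_ge0 ?ler0n.
by move=> c ccs; rewrite /ind le_half // (breakpoints_gt0 bp ccs).
Qed.

(* A neighbour w of a terminal with d_w < 1/2 is not cut at threshold 1/2:
   no ball reaches beyond 1/2 inside w. *)
Lemma round_half_vanishes t w : t \in T -> w \notin T -> e t w ->
  d w < 2^-1 -> round 2^-1 w = 0.
Proof.
move=> tT wT etw small; rewrite /round /ncuts (_ : [set _ in T | _] = set0).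
  by rewrite cards0.
apply/setP => t'; rewrite !inE; apply/negP => /andP[t'T /andP[lt_half le_half]].
have wtw : wt w = d w by rewrite /wt (negbTE wT).
case: (eqVneq t t') => [eqtt'|ne].
  by move: le_half; rewrite -eqtt' dist_nbh // add0r wtw leNgt small.
by have := dist_pair tT t'T ne wT; rewrite dist_nbh // add0r wtw; lra.
Qed.

(* Half-integrality next to the terminals: if d is optimal and forcing
   d_w = 0 strictly raises the optimum, then d_w >= 1/2.  Otherwise the
   rounding at threshold 1/2 would satisfy d_w = 0, so the average rounding
   cost would exceed that of d. *)
Lemma essential_half t w : t \in T -> w \notin T -> e t w ->
  (forall d', lp_feasible e T set0 d' -> lp_cost T d <= lp_cost T d') ->
  (exists LPw, lp_value e T [set w] LPw /\ lp_cost T d < LPw) ->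
  2^-1 <= d w.
Proof.
move=> tT wT etw d_opt [LPw [[_ LPw_min] raised]]; rewrite leNgt; apply/negP => small.
have [cs bp] := breakpoints_exist; have half_cs : 2^-1 \in cs by case: bp.
have feas_w : lp_feasible e T [set w] (round 2^-1).
  have half_gt0 : (0 : R) < 2^-1 by lra.
  have half_le1 : (2^-1 : R) <= 1 by lra.
  have [round_ge0' [round_paths _]] := round_feasible half_gt0 half_le1.
  split=> //; split=> // w'; rewrite inE => /eqP->.
  exact: round_half_vanishes etw small.
have : lp_cost T d * 2^-1 <
       step_integral 0 cs (fun c => lp_cost T (round c)).
  rewrite -(step_integral_one bp) -step_integralZ.
  apply: ltr_step_integral; first by case: bp.
    move=> c ccs; rewrite mulr1; apply/d_opt/round_feasible.
      exact: breakpoints_gt0 bp ccs.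
    by case: bp => _ le_half _ _; apply: le_trans (le_half c ccs) _; lra.
  by exists 2^-1; rewrite // mulr1 (lt_le_trans raised) ?LPw_min.
by have := average_rounding_cost bp; lra.
Qed.

End Distances.

Section HalfSolution.
Variables (R : realFieldType) (V : finType) (e : rel V) (T : {set V}).
Hypothesis e_sym : symmetric e.
Hypothesis nonadjacent_terminals : forall t t', t \in T -> t' \in T -> ~~ e t t'.
Hypothesis no_shared_neighbour : forall v t t', v \notin T -> t \in T -> t' \in T ->
  t != t' -> e v t -> e v t' -> False.

Definition half_on (A : {set V}) (v : V) : R := if v \in A then 2^-1 else 0.

Lemma half_on_ge0 (A : {set V}) v : 0 <= half_on A v.
Proof. by rewrite /half_on; case: ifP => _; lra. Qed.

Lemma lp_cost_half_on (A : {set V}) : A \subset ~: T -> lp_cost T (half_on A) = 2^-1 * #|A|%:R.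
Proof.
move=> AT; rewrite /lp_cost /half_on -big_mkcondr /=.
rewrite (eq_bigl (mem A)) ?sumr_const ?mulr_natr // => v /=.
by case: (boolP (v \in A)) => [/(subsetP AT)->|]; rewrite ?andbF.
Qed.

Lemma nbhSP v : reflect (v \notin T /\ exists2 t, t \in T & e t v) (v \in nbhS e T).
Proof.
rewrite /nbhS in_setD; apply: (iffP andP) => [[vT /bigcupP[t tT]]|[vT [t tT etv]]].
  by rewrite inE => etv; split=> //; exists t.
by split=> //; apply/bigcupP; exists t; rewrite ?inE.
Qed.

Lemma nbhS_nonterminal : nbhS e T \subset ~: T.
Proof. by apply/subsetP => v /nbhSP[vT _]; rewrite inE. Qed.

Lemma nbh_nbhS t : t \in T -> nbh e t \subset nbhS e T.
Proof.
move=> tT; apply/subsetP => v; rewrite inE => etv; apply/nbhSP; split.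
  exact: contraL (nonadjacent_terminals tT) etv.
by exists t.
Qed.

Lemma term_path_ends x s : term_path e T x s ->
  exists y z, [/\ y \in x :: s, z \in x :: s, e x y, e z (last x s) &
                  (y \notin T) && (z \notin T)].
Proof.
case/and5P => px _ xT lT xl.
have [y ys exy] : exists2 y, y \in s & e x y.
  case: s px xl {lT} => [|y s]; first by rewrite eqxx.
  by case/andP=> exy _ _; exists y; rewrite ?mem_head.
have [z zs ezl] : exists2 z, z \in x :: s & e z (last x s).
  case/lastP: s px xl {ys lT} => [|s l]; first by rewrite eqxx.
  rewrite rcons_path last_rcons => /andP[_ ezl] _; exists (last x s) => //.
  by rewrite -[x :: rcons s l]/(rcons (x :: s) l) mem_rcons inE mem_last orbT.
exists y, z; split; rewrite ?inE ?ys ?orbT //.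
rewrite (contraL (@nonadjacent_terminals x y xT) exy).
exact: contraL (@nonadjacent_terminals z _ ^~ lT) ezl.
Qed.

Lemma path_constraint_of_halves (f : V -> R) x s y z : term_path e T x s ->
  (forall v, 0 <= f v) -> y \in x :: s -> z \in x :: s ->
  y \notin T -> z \notin T -> 2^-1 <= f y -> 2^-1 <= f z ->
  (y = z -> 1 <= f y) -> 1 <= \sum_(v <- x :: s | v \notin T) f v.
Proof.
move=> /and5P[_ ux _ _ _] f_ge0 ys zs yT zT fy fz one.
rewrite -big_filter; apply: (sum_ge1_of_two (u := y) (q := z)).
- by rewrite filter_uniq.
- by move=> v _; apply: f_ge0.
- by rewrite mem_filter yT.
- by rewrite mem_filter zT.
- by move=> _; lra.
- exact: one.
Qed.

(* A terminal path meets N(T) in two distinct vertices: its ends' neighbours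
   on it differ, as no non-terminal is adjacent to two terminals. *)
Lemma half_solution_feasible : lp_feasible e T set0 (half_on (nbhS e T)).
Proof.
split; first by move=> v _; apply: half_on_ge0.
split; last by move=> w; rewrite in_set0.
move=> x s /[dup] tp /and5P[_ _ xT lT xl].
have [y [z [ys zs exy ezl /andP[yT zT]]]] := term_path_ends tp.
have yN : y \in nbhS e T by apply/nbhSP; split=> //; exists x.
have zN : z \in nbhS e T by apply/nbhSP; split=> //; exists (last x s); rewrite // e_sym.
apply: (path_constraint_of_halves tp (half_on_ge0 _) ys zs yT zT); rewrite /half_on ?yN ?zN //.
move=> eqyz; case: (no_shared_neighbour yT xT lT xl); first by rewrite e_sym.
by rewrite eqyz.
Qed.

Lemma half_solution_le (d : V -> R) : lp_feasible e T set0 d ->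
  (forall t w, t \in T -> w \notin T -> e t w -> 2^-1 <= d w) ->
  lp_cost T (half_on (nbhS e T)) <= lp_cost T d.
Proof.
move=> [d_ge0 _] half_d; apply: ler_sum => v; rewrite inE => vT.
rewrite /half_on; case: ifP => [/nbhSP[_ [t tT etv]]|_]; first exact: half_d etv.
exact: d_ge0.
Qed.

Lemma nbh_sep_cut t : t \in T -> sep_cut e T t (nbh e t).
Proof.
move=> tT; rewrite /sep_cut (subset_trans (nbh_nbhS tT) nbhS_nonterminal) /=.
apply/forall_inP => t' /setD1P[t't _]; apply/negP => /connectP[[|y p] /= pp t'_last].
  by rewrite t'_last eqxx in t't.
by case/andP: pp => /and3P[ety _]; rewrite inE ety.
Qed.

Lemma sep_cut_meets_path t S x s : sep_cut e T t S -> term_path e T x s ->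
  (x = t \/ last x s = t) -> has (mem S) (x :: s).
Proof.
move=> /andP[_ /forall_inP sep] /and5P[px _ xT lT xl] at_t.
apply: contraT; rewrite -all_predC => /allP avoid.
have sym_del : symmetric (del_rel e S).
  move=> u v; rewrite /del_rel /= [e u v]e_sym.
  by case: (u \in S); case: (v \in S); rewrite ?andbF.
have conn : connect (del_rel e S) x (last x s).
  apply/connectP; exists s => //.
  elim: s x px avoid {xT lT xl at_t} => //= y s IH x /andP[exy ps] avoid.
  rewrite /del_rel /= exy (avoid x) ?mem_head // (avoid y) ?inE ?eqxx ?orbT //=.
  by apply: IH => // u us; apply: avoid; rewrite inE us orbT.
case: at_t => [xt|lt].
  by move: (sep (last x s)); rewrite in_setD1 lT -xt eq_sym xl conn => /(_ isT).
by move: (sep x); rewrite in_setD1 xT -lt xl (sym_connect_sym sym_del) conn => /(_ isT).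
Qed.

Lemma shifted_solution_feasible t S w : t \in T -> sep_cut e T t S ->
  w \in nbh e t -> w \notin S ->
  lp_feasible e T [set w]
    (fun v => half_on S v + half_on (nbhS e T :\: nbh e t) v).
Proof.
move=> tT cutS wN wS; set N' := nbhS e T :\: nbh e t.
have S_nonterminal u : u \in S -> u \notin T.
  by case/andP: cutS => /subsetP sub _ /sub; rewrite inE.
have N'_nbh u t0 : u \notin T -> t0 \in T -> t0 != t -> e t0 u -> u \in N'.
  move=> uT t0T ne et0u; rewrite in_setD; apply/andP; split.
    by rewrite inE; apply/negP => etu; apply: (no_shared_neighbour uT t0T tT ne); rewrite e_sym.
  by apply/nbhSP; split=> //; exists t0.
have f_ge0 v : 0 <= half_on S v + half_on N' v by rewrite addr_ge0 ?half_on_ge0.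
have half_S v : v \in S -> 2^-1 <= half_on S v + half_on N' v.
  by move=> vS; rewrite /half_on vS; case: ifP => _; lra.
have half_N' v : v \in N' -> 2^-1 <= half_on S v + half_on N' v.
  by move=> vN'; rewrite /half_on vN'; case: ifP => _; lra.
have one v : v \in S -> v \in N' -> 1 <= half_on S v + half_on N' v.
  by move=> vS vN'; rewrite /half_on vS vN'; lra.
split; first by move=> v _.
split; last first.
  move=> w'; rewrite inE => /eqP->.
  by rewrite /half_on (negbTE wS) in_setD wN /= add0r.
move=> x s /[dup] tp /and5P[_ _ xT lT xl].
have [y [z [ys zs exy ezl /andP[yT zT]]]] := term_path_ends tp.
have apply_halves := path_constraint_of_halves tp f_ge0.
case: (eqVneq x t) => [xt|xt].
  have zN' : z \in N' by apply: (N'_nbh _ _ zT lT); rewrite 1?e_sym // -xt eq_sym.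
  case/hasP: (sep_cut_meets_path cutS tp (or_introl xt)) => u us uS.
  apply: (apply_halves u z) => //; first exact: S_nonterminal.
  - exact: half_S.
  - exact: half_N'.
  - by move=> uz; apply: one => //; rewrite uz.
case: (eqVneq (last x s) t) => [lt|lt].
  have yN' : y \in N' by apply: (N'_nbh _ _ yT xT).
  case/hasP: (sep_cut_meets_path cutS tp (or_intror lt)) => u us uS.
  apply: (apply_halves u y) => //; first exact: S_nonterminal.
  - exact: half_S.
  - exact: half_N'.
  - by move=> uy; apply: one => //; rewrite uy.
have yN' : y \in N' by apply: (N'_nbh _ _ yT xT).
have zN' : z \in N' by apply: (N'_nbh _ _ zT lT); rewrite 1?e_sym.
apply: (apply_halves y z) => //; [exact: half_N' | exact: half_N' |].
move=> eqyz; case: (no_shared_neighbour yT xT lT xl); first by rewrite e_sym.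
by rewrite eqyz.
Qed.

(* N(t) is the unique minimum separating cut of t as soon as forcing d_w = 0
   for any w in N(t) raises the optimum above the cost of the half solution:
   a separating cut S with |S| <= |N(t)| missing some w in N(t) would yield
   the shifted solution, of cost at most that of the half solution. *)
Lemma nbh_unique_min_cut t : t \in T ->
  (forall w, w \in nbh e t -> exists LPw, lp_value e T [set w] LPw /\
     lp_cost T (half_on (nbhS e T)) < LPw) ->
  unique_min_sep_cut e T t (nbh e t).
Proof.
move=> tT essential; split; first exact: nbh_sep_cut.
move=> S cutS card_S; have [sub|/subsetPn[w wN wS]] := boolP (nbh e t \subset S).
  by apply/eqP; rewrite eq_sym eqEcard sub card_S.
exfalso; have [LPw [[_ LPw_min] raised]] := essential w wN.
have ST : S \subset ~: T by case/andP: cutS.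
have N'T : nbhS e T :\: nbh e t \subset ~: T.
  exact: subset_trans (subsetDl _ _) nbhS_nonterminal.
have card_shift : #|S|%:R + #|nbhS e T :\: nbh e t|%:R <= #|nbhS e T|%:R :> R.
  rewrite -natrD ler_nat -(cardsID (nbh e t) (nbhS e T)).
  by rewrite (setIidPr (nbh_nbhS tT)) leq_add2r.
have := LPw_min _ (shifted_solution_feasible tT cutS wN wS).
rewrite /lp_cost big_split /= -!/(lp_cost T _) !lp_cost_half_on //.
move: raised; rewrite lp_cost_half_on ?nbhS_nonterminal //.
lra.
Qed.

End HalfSolution.

Unset Implicit Arguments.

Theorem mainTheorem3 (R : realFieldType) (V : finType) (e : rel V)
  (T : {set V}) (k : int) (LP : R)
  (e_sym : symmetric e) (e_irr : irreflexive e)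
  (hLP : lp_value e T set0 LP)
  (R1a : forall t t', t \in T -> t' \in T -> ~~ e t t')
  (R1b : 0 <= k%:~R - LP)
  (R2 : forall v t t', v \notin T -> t \in T -> t' \in T -> t != t' ->
          e v t -> e v t' -> False)
  (R3 : forall t w, t \in T -> w \notin T -> e t w ->
          exists LPw : R, lp_value e T [set w] LPw /\ LP < LPw) :
  lp_optimal e T
    (fun v : V => if v \in nbhS e T then (2%:R)^-1 else (0 : R))
  /\ (forall t, t \in T -> unique_min_sep_cut e T t (nbh e t)).
Proof.
case: hLP => [[d [d_feas d_cost]] LP_min]; subst LP.
(* An optimal solution is >= 1/2 on N(T), so the half solution is optimal. *)
have d_half t w : t \in T -> w \notin T -> e t w -> 2^-1 <= d w.
  move=> tT wT etw; apply: (essential_half e_sym d_feas R1a tT wT etw) => //.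
  exact: R3 tT wT etw.
have half_le := half_solution_le d_feas d_half.
split.
  split; first exact: half_solution_feasible e_sym R1a R2.
  by move=> d' /LP_min; apply: le_trans.
move=> t tT; apply: (nbh_unique_min_cut e_sym R1a R2 tT) => w wN.
have etw : e t w by rewrite inE in wN.
have [LPw [LPw_val raised]] := R3 t w tT (contraL (@R1a t w tT) etw) etw.
by exists LPw; split=> //; apply: le_lt_trans raised.
Qed.
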